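(* Let $n\ge 2$ and $w\le n/2$ be positive integers, and let $\pi:\mathbb{Z}\to\mathbb{Z}$ be a bijection with $\pi(i+n)=\pi(i)+n$ for all $i$ and $|\pi(i)-i|\le w$ for all $i$ (equivalently, $\pi$ corresponds to a cyclically banded permutation $\bar\pi\in S_n$ of bandwidth $w$, i.e. $|\bar\pi_i-i|\le w$ or $|\bar\pi_i-i|\ge n-w$ for all $i$). Then $$\pi=\sigma^1\sigma^2\cdots\sigma^{2w-1}S^k,$$ where each $\sigma^i$ is a cyclic permutation of bandwidth $1$ that is a product of pairwise nonadjacent (modulo $n$) periodic simple transpositions, $S$ is the cyclic shift by $1$, and $k$ is an integer with $|k|\le w$.
   Context: For $r\in\mathbb{Z}/n\mathbb{Z}$, the periodic simple transposition $e_r$ (the cyclic analogue of $s_r=(r,r+1)$, with $s_0=s_n$ exchanging positions $n$ and $1$) is the bijection of $\mathbb{Z}$ exchanging $a$ and $a+1$ for every $a\equiv r\pmod n$ and fixing all other integers; $e_r$ and $e_{r'}$ are adjacent modulo $n$ if $r-r'\equiv\pm1\pmod n$. The cyclic shift $S$ is the periodic bijection $i\mapsto i+1$ of $\mathbb{Z}$ (corresponding to the cyclic shift $\pi_1\pi_2\cdots\pi_n\mapsto\pi_2\cdots\pi_n\pi_1$ on $S_n$). A periodic bijection $\rho$ has bandwidth $1$ if $|\rho(i)-i|\le1$ for all $i$. *)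

From Stdlib Require Import ZArith List.
Import ListNotations.
Open Scope Z_scope.

Definition periodic_bij (n : Z) (f : Z -> Z) : Prop :=
  (forall x y, f x = f y -> x = y) /\
  (forall y, exists x, f x = y) /\
  (forall i, f (i + n) = f i + n).

Definition bandwidth_le (w : Z) (f : Z -> Z) : Prop :=
  forall i, Z.abs (f i - i) <= w.

(* Periodic simple transposition e_r: exchanges a and a+1 for every
   a = r (mod n), fixes all other integers (well defined for n >= 2). *)
Definition per_transp (n r : Z) (a : Z) : Z :=
  if Z.eqb (a mod n) (r mod n) then a + 1
  else if Z.eqb ((a - 1) mod n) (r mod n) then a - 1
  else a.

Definition adjacent_mod (n r r' : Z) : Prop :=
  (r - r' - 1) mod n = 0 \/ (r - r' + 1) mod n = 0.

Definition nonadj_family (n : Z) (rs : list Z) : Prop :=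
  NoDup (map (fun r => r mod n) rs) /\
  (forall r r', In r rs -> In r' rs -> ~ adjacent_mod n r r').

Definition prod_transp (n : Z) (rs : list Z) : Z -> Z :=
  fold_right (fun r f => fun a => per_transp n r (f a)) (fun a => a) rs.

Definition compose_list (fs : list (Z -> Z)) : Z -> Z :=
  fold_right (fun g f => fun a => g (f a)) (fun a => a) fs.

Definition shift_pow (k : Z) (i : Z) : Z := i + k.

(** Work with the inverse [A] of [pi]; it is again a periodic bijection of
    bandwidth [w].  For [p < q] put [ω(p,q) = 2 (A p - A q) + (q - p)]; bandwidth
    [w] gives [ω <= 4w - 1].  Suppose [ω <= M] with [M = 2m + 1 >= 3].  Call [r] a
    swap site when [r] or [r + 1] is an end of a pair of weight [M], or when [r]
    is the left end of a pair of weight [M - 1] neither of whose ends is of the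
    first kind.  Swap sites are descents of [A], two of them are never
    consecutive, and they are [n]-periodic, so they are the residues of a family
    of pairwise nonadjacent periodic transpositions.  Precomposing [A] with its
    product lowers the bound on [ω] to [M - 2] and keeps bandwidth [w].  After
    [2w - 1] such layers [ω <= 1], so [A] is increasing, hence a shift by some
    [k] with [|k| <= w]. *)

From Stdlib Require Import ZArith List Lia Classical ClassicalEpsilon.
Import ListNotations.
Open Scope Z_scope.

(** * Periodic transpositions *)

Lemma mod_eq_0_ex (x n : Z) : x mod n = 0 <-> exists k, x = k * n.
Proof.
  pose proof (Z.cong_iff_ex x 0 n) as H. rewrite Zmod_0_l in H. rewrite H.
  split; intros [k Hk]; exists k; lia.
Qed.

Lemma mod_pred_neq (n a : Z) : 2 <= n -> (a - 1) mod n <> a mod n.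
Proof.
  intros Hn E. apply Z.cong_iff_ex in E. destruct E as [k Hk].
  destruct (Z_le_gt_dec 0 k); nia.
Qed.

Lemma per_transp_up (n r a : Z) : a mod n = r mod n -> per_transp n r a = a + 1.
Proof. intros E. unfold per_transp. rewrite E, Z.eqb_refl. reflexivity. Qed.

Lemma per_transp_down (n r a : Z) :
  2 <= n -> (a - 1) mod n = r mod n -> per_transp n r a = a - 1.
Proof.
  intros Hn E. unfold per_transp. rewrite E, Z.eqb_refl.
  destruct (Z.eqb_spec (a mod n) (r mod n)) as [E'|]; [|reflexivity].
  exfalso. apply (mod_pred_neq n a Hn). congruence.
Qed.

Lemma per_transp_fix (n r a : Z) :
  a mod n <> r mod n -> (a - 1) mod n <> r mod n -> per_transp n r a = a.
Proof.
  intros E1 E2. unfold per_transp.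
  destruct (Z.eqb_spec (a mod n) (r mod n)); [contradiction|].
  destruct (Z.eqb_spec ((a - 1) mod n) (r mod n)); [contradiction|reflexivity].
Qed.

Definition swaps_at (P : Z -> Prop) (L : Z -> Z) : Prop :=
  forall a, (P a -> L a = a + 1) /\ (P (a - 1) -> L a = a - 1) /\
            (~ P a -> ~ P (a - 1) -> L a = a).

Lemma swaps_at_iff (P Q : Z -> Prop) (L : Z -> Z) :
  (forall a, P a <-> Q a) -> swaps_at P L -> swaps_at Q L.
Proof.
  intros HPQ HL a. destruct (HL a) as [H1 [H2 H3]].
  rewrite <- !HPQ. auto.
Qed.

Section SwapsAt.

Variables (P : Z -> Prop) (L : Z -> Z).
Hypothesis HL : swaps_at P L.

Lemma swaps_at_cases a :
  (P a /\ L a = a + 1) \/ (P (a - 1) /\ L a = a - 1) \/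
  (~ P a /\ ~ P (a - 1) /\ L a = a).
Proof.
  destruct (HL a) as [H1 [H2 H3]].
  destruct (classic (P a)); [left; auto|].
  destruct (classic (P (a - 1))); [right; left; auto|right; right; auto].
Qed.

Lemma swaps_at_involutive a : L (L a) = a.
Proof.
  destruct (swaps_at_cases a) as [[Ha E]|[[Ha E]|[_ [_ E]]]]; rewrite E.
  - destruct (HL (a + 1)) as [_ [H _]]. rewrite H; [lia|].
    replace (a + 1 - 1) with a by lia. exact Ha.
  - destruct (HL (a - 1)) as [H _]. rewrite H; [lia|exact Ha].
  - exact E.
Qed.

Lemma swaps_at_bandwidth : bandwidth_le 1 L.
Proof.
  intro a. destruct (swaps_at_cases a) as [[_ E]|[[_ E]|[_ [_ E]]]]; rewrite E; lia.
Qed.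

Lemma swaps_at_periodic_bij (n : Z) :
  (forall x, P (x + n) <-> P x) -> periodic_bij n L.
Proof.
  intros Hper. split; [|split].
  - intros x y E. rewrite <- (swaps_at_involutive x), <- (swaps_at_involutive y), E.
    reflexivity.
  - intro y. exists (L y). apply swaps_at_involutive.
  - intro i. destruct (HL (i + n)) as [H1 [H2 H3]].
    replace (i + n - 1) with (i - 1 + n) in H2, H3 by lia.
    destruct (swaps_at_cases i) as [[Hi E]|[[Hi E]|[N1 [N2 E]]]]; rewrite E.
    + rewrite H1; [lia|apply Hper, Hi].
    + rewrite H2; [lia|apply Hper, Hi].
    + rewrite H3; [lia|rewrite Hper; exact N1|rewrite Hper; exact N2].
Qed.

End SwapsAt.

Definition in_residues (n : Z) (rs : list Z) (a : Z) : Prop :=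
  Exists (fun r => a mod n = r mod n) rs.

Lemma per_transp_swaps_at (n r : Z) (Q : Z -> Prop) (L : Z -> Z) :
  2 <= n -> swaps_at Q L ->
  (forall a, a mod n = r mod n -> ~ Q a /\ ~ Q (a - 1) /\ ~ Q (a + 1)) ->
  swaps_at (fun a => a mod n = r mod n \/ Q a) (fun a => per_transp n r (L a)).
Proof.
  intros Hn HL Hsep a. destruct (HL a) as [Hup [Hdown Hfix]].
  split; [|split].
  - intros [Ea|Qa].
    + destruct (Hsep a Ea) as [N0 [N1 _]].
      rewrite (Hfix N0 N1). apply per_transp_up. exact Ea.
    + rewrite (Hup Qa). apply per_transp_fix; intro E.
      * destruct (Hsep _ E) as [_ [N _]]. apply N.
        replace (a + 1 - 1) with a by lia. exact Qa.
      * replace (a + 1 - 1) with a in E by lia. destruct (Hsep _ E) as [N _]. exact (N Qa).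
  - intros [Ea|Qa].
    + destruct (Hsep _ Ea) as [N0 [_ N1]]. replace (a - 1 + 1) with a in N1 by lia.
      rewrite (Hfix N1 N0). apply per_transp_down; assumption.
    + rewrite (Hdown Qa). apply per_transp_fix; intro E.
      * destruct (Hsep _ E) as [N _]. exact (N Qa).
      * destruct (Hsep _ E) as [_ [_ N]]. apply N.
        replace (a - 1 - 1 + 1) with (a - 1) by lia. exact Qa.
  - intros N0 N1. rewrite Hfix by tauto. apply per_transp_fix; tauto.
Qed.

Lemma nonadj_family_cons (n r : Z) (rs : list Z) :
  nonadj_family n (r :: rs) -> nonadj_family n rs.
Proof.
  intros [Hnd Hadj]. split.
  - simpl in Hnd. inversion Hnd. assumption.
  - intros x y Hx Hy. apply Hadj; right; assumption.
Qed.

Lemma prod_transp_swaps_at (n : Z) (rs : list Z) :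
  2 <= n -> nonadj_family n rs -> swaps_at (in_residues n rs) (prod_transp n rs).
Proof.
  intros Hn. induction rs as [|r rs IH]; intros Hfam.
  - intro a. unfold in_residues. split; [|split]; intros H; try inversion H. reflexivity.
  - apply swaps_at_iff with (P := fun a => a mod n = r mod n \/ in_residues n rs a).
    { intro a. unfold in_residues. rewrite Exists_cons. tauto. }
    apply per_transp_swaps_at; [exact Hn|exact (IH (nonadj_family_cons _ _ _ Hfam))|].
    destruct Hfam as [Hnd Hadj]. simpl in Hnd. inversion Hnd as [|? ? Hnotin _]; subst.
    intros a Ea. unfold in_residues.
    repeat split; intros Hex; apply Exists_exists in Hex; destruct Hex as [r' [Hr' E']].
    + apply Hnotin. rewrite <- Ea, E'. apply (in_map (fun x => x mod n)). exact Hr'.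
    + apply (Hadj r r' (or_introl eq_refl) (or_intror Hr')). left.
      apply Z.cong_iff_ex in Ea, E'. destruct Ea as [k Hk], E' as [k' Hk'].
      apply mod_eq_0_ex. exists (k' - k). lia.
    + apply (Hadj r r' (or_introl eq_refl) (or_intror Hr')). right.
      apply Z.cong_iff_ex in Ea, E'. destruct Ea as [k Hk], E' as [k' Hk'].
      apply mod_eq_0_ex. exists (k' - k). lia.
Qed.

Lemma periodic_pred_shift (n : Z) (P : Z -> Prop) :
  (forall x, P (x + n) <-> P x) -> forall k x, P (x + k * n) <-> P x.
Proof.
  intros Hper k. induction k as [|k IH|k IH] using Z.peano_ind; intro x.
  - rewrite Z.mul_0_l, Z.add_0_r. reflexivity.
  - rewrite <- (IH x). replace (x + Z.succ k * n) with (x + k * n + n) by lia. apply Hper.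
  - rewrite <- (IH x). replace (x + k * n) with (x + Z.pred k * n + n) by lia.
    symmetry. apply Hper.
Qed.

Lemma periodic_pred_mod (n : Z) (P : Z -> Prop) :
  (forall x, P (x + n) <-> P x) -> forall x y, x mod n = y mod n -> P x <-> P y.
Proof.
  intros Hper x y E. apply Z.cong_iff_ex in E. destruct E as [k Hk].
  replace x with (y + k * n) by lia. apply periodic_pred_shift. exact Hper.
Qed.

Lemma residue_layer (n : Z) (P : Z -> Prop) :
  2 <= n -> (forall x, P (x + n) <-> P x) -> (forall x, P x -> ~ P (x + 1)) ->
  exists rs, nonadj_family n rs /\ forall a, P a <-> in_residues n rs a.
Proof.
  intros Hn Hper Hsep.
  pose proof (periodic_pred_mod n P Hper) as Hcong.
  set (rs := filter (fun r => if excluded_middle_informative (P r) then true else false)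
                    (map Z.of_nat (seq 0 (Z.to_nat n)))).
  assert (Hrs : forall r, In r rs <-> 0 <= r < n /\ P r).
  { intro r. unfold rs. rewrite filter_In, in_map_iff.
    destruct (excluded_middle_informative (P r)) as [Hr|Hr]; split.
    - intros [[k [<- Hk]] _]. apply in_seq in Hk. split; [lia|exact Hr].
    - intros [Hrange _]. split; [|reflexivity].
      exists (Z.to_nat r). split; [lia|apply in_seq; lia].
    - intros [_ F]. discriminate F.
    - intros [_ F]. contradiction. }
  assert (Hmod : map (fun r => r mod n) rs = rs).
  { rewrite <- (map_id rs) at 2. apply map_ext_in. intros r Hr.
    apply Z.mod_small. apply Hrs in Hr. tauto. }
  exists rs. split; [split|].
  - rewrite Hmod. apply NoDup_filter, NoDup_map_NoDup_ForallPairs; [|apply seq_NoDup].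
    intros x y _ _ E. lia.
  - intros r r' Hr Hr' Hadj. apply Hrs in Hr, Hr'.
    destruct Hadj as [E|E]; apply mod_eq_0_ex in E; destruct E as [k Hk].
    + apply (Hsep r'); [tauto|]. apply (Hcong r); [|tauto].
      apply Z.cong_iff_ex. exists k. lia.
    + apply (Hsep r); [tauto|]. apply (Hcong r'); [|tauto].
      apply Z.cong_iff_ex. exists (- k). lia.
  - intro a. unfold in_residues. rewrite Exists_exists. split.
    + intros Ha. exists (a mod n). split.
      * apply Hrs. split; [apply Z.mod_pos_bound; lia|].
        apply (Hcong a); [symmetry; apply Z.mod_mod; lia|exact Ha].
      * symmetry. apply Z.mod_mod. lia.
    + intros [r [Hr E]]. apply Hrs in Hr. apply (Hcong a r E). tauto.
Qed.

(** * Weights and swap sites *)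

Definition descent_weight (A : Z -> Z) (p q : Z) : Z := 2 * (A p - A q) + (q - p).

Definition weight_bounded (A : Z -> Z) (M : Z) : Prop :=
  forall p q, p < q -> descent_weight A p q <= M.

Definition tight_end (A : Z -> Z) (M r : Z) : Prop :=
  (exists q, r < q /\ descent_weight A r q = M) \/
  (exists p, p < r + 1 /\ descent_weight A p (r + 1) = M).

(** A site [r] stands for the transposition of [r] and [r + 1]. *)
Definition swap_site (A : Z -> Z) (M r : Z) : Prop :=
  tight_end A M r \/
  exists q, r < q /\ descent_weight A r q = M - 1 /\
            ~ tight_end A M r /\ ~ tight_end A M (q - 1).

Section Shift.

Variables (A : Z -> Z) (M c : Z).
Hypothesis Hc : forall x, A (x + c) = A x + c.

Lemma descent_weight_shift p q : descent_weight A (p + c) (q + c) = descent_weight A p q.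
Proof. unfold descent_weight. rewrite !Hc. lia. Qed.

Lemma tight_end_shift r : tight_end A M r -> tight_end A M (r + c).
Proof.
  intros [[q [Hq E]]|[p [Hp E]]].
  - left. exists (q + c). split; [lia|]. rewrite descent_weight_shift. exact E.
  - right. exists (p + c). split; [lia|].
    replace (r + c + 1) with (r + 1 + c) by lia. rewrite descent_weight_shift. exact E.
Qed.

Lemma shift_opp x : A (x + - c) = A x + - c.
Proof. pose proof (Hc (x + - c)) as H. replace (x + - c + c) with x in H by lia. lia. Qed.

End Shift.

Lemma tight_end_shift_iff (A : Z -> Z) (M c r : Z) :
  (forall x, A (x + c) = A x + c) -> tight_end A M (r + c) <-> tight_end A M r.
Proof.
  intros Hc. split; [|apply tight_end_shift; exact Hc].
  intro H. apply (tight_end_shift A M (- c) (shift_opp A c Hc)) in H.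
  replace (r + c + - c) with r in H by lia. exact H.
Qed.

Lemma swap_site_shift (A : Z -> Z) (M c r : Z) :
  (forall x, A (x + c) = A x + c) -> swap_site A M r -> swap_site A M (r + c).
Proof.
  intros Hc [Ht|[q [Hq [E [N1 N2]]]]].
  - left. apply tight_end_shift; assumption.
  - right. exists (q + c). split; [lia|]. split; [rewrite descent_weight_shift; assumption|].
    replace (q + c - 1) with (q - 1 + c) by lia. rewrite !tight_end_shift_iff by exact Hc.
    split; assumption.
Qed.

Lemma swap_site_periodic (A : Z -> Z) (M n : Z) :
  (forall x, A (x + n) = A x + n) -> forall r, swap_site A M (r + n) <-> swap_site A M r.
Proof.
  intros Hn r. split; [|apply swap_site_shift; exact Hn].
  intro H. apply (swap_site_shift A M (- n) _ (shift_opp A n Hn)) in H.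
  replace (r + n + - n) with r in H by lia. exact H.
Qed.

Section SwapSites.

Variables (A : Z -> Z) (m : Z).
Local Notation M := (2 * m + 1).
Hypothesis Hm : 1 <= m.
Hypothesis Hinj : forall x y, A x = A y -> x = y.
Hypothesis Hbound : weight_bounded A M.

Local Ltac weight_at p q :=
  let H := fresh "B" in pose proof (Hbound p q ltac:(lia)) as H; unfold descent_weight in H.

Lemma swap_site_descent r : swap_site A M r -> A (r + 1) < A r.
Proof.
  intros Hs.
  assert (Hne : A (r + 1) <> A r) by (intro E; apply Hinj in E; lia).
  destruct Hs as [[[q [Hq E]]|[p [Hp E]]]|[q [Hq [E [_ Hnt]]]]]; unfold descent_weight in E.
  - destruct (Z.eq_dec q (r + 1)) as [->|Hq']; [lia|]. weight_at (r + 1) q. lia.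
  - destruct (Z.eq_dec p r) as [->|Hp']; [lia|]. weight_at p r. lia.
  - destruct (Z.eq_dec q (r + 1)) as [->|Hq']; [lia|].
    destruct (Z_lt_le_dec (A r) (A (r + 1))) as [Hasc|]; [|lia].
    (* an ascent at [r] would make [(r + 1, q)] a pair of weight [M] *)
    exfalso. apply Hnt. right. exists (r + 1). replace (q - 1 + 1) with q by lia.
    split; [lia|]. weight_at (r + 1) q. unfold descent_weight. lia.
Qed.

(** Two consecutive descents carry an even weight, while [M] is odd. *)
Lemma swap_site_succ r : swap_site A M r -> ~ swap_site A M (r + 1).
Proof.
  intros H1 H2.
  pose proof (swap_site_descent r H1) as D1.
  pose proof (swap_site_descent (r + 1) H2) as D2.
  weight_at r (r + 2).
  destruct H1 as [[[q [Hq E]]|[p [Hp E]]]|[q [Hq [E [N1 N2]]]]];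
  destruct H2 as [[[q' [Hq' E']]|[p' [Hp' E']]]|[q' [Hq' [E' [N1' N2']]]]];
  unfold descent_weight in E, E'; replace (r + 1 + 1) with (r + 2) in * by lia.
  - weight_at r q'. lia.
  - destruct (Z.eq_dec q (r + 1)) as [->|]; [lia|].
    destruct (Z.eq_dec q (r + 2)) as [->|]; [lia|].
    destruct (Z.eq_dec p' (r + 1)) as [->|]; [lia|].
    destruct (Z.eq_dec p' r) as [->|]; [lia|].
    weight_at p' q. lia.
  - weight_at r q'. lia.
  - weight_at p q'. lia.
  - weight_at p (r + 2). lia.
  - weight_at p q'. lia.
  - weight_at r q'. lia.
  - destruct (Z.eq_dec p' (r + 1)) as [->|]; [lia|].
    destruct (Z.eq_dec p' r) as [->|]; [lia|].
    destruct (Z.eq_dec q (r + 1)) as [->|]; [lia|].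
    apply N2. right. exists p'. replace (q - 1 + 1) with q by lia. split; [lia|].
    unfold descent_weight.
    destruct (Z.eq_dec q (r + 2)) as [->|]; [lia|]. weight_at p' q. lia.
  - weight_at r q'. lia.
Qed.

Section Layer.

Variable L : Z -> Z.
Hypothesis HL : swaps_at (swap_site A M) L.

Lemma swap_layer_cases x :
  (L x = x + 1 /\ A (x + 1) < A x) \/ (L x = x - 1 /\ A x < A (x - 1)) \/ L x = x.
Proof.
  destruct (swaps_at_cases _ _ HL x) as [[S E]|[[S E]|[_ [_ E]]]].
  - left. split; [exact E|]. apply swap_site_descent. exact S.
  - right; left. split; [exact E|].
    pose proof (swap_site_descent _ S) as D. replace (x - 1 + 1) with x in D by lia. exact D.
  - right; right. exact E.
Qed.

Lemma tight_pair_swapped p q :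
  p < q -> descent_weight A p q = M -> L p = p + 1 /\ L q = q - 1.
Proof.
  intros Hpq E. split.
  - apply (HL p). left. left. exists q. split; assumption.
  - apply (HL q). left. right. exists p. replace (q - 1 + 1) with q by lia. split; assumption.
Qed.

Lemma near_tight_pair_swapped p q :
  p < q -> descent_weight A p q = M - 1 -> L p = p + 1 \/ L q = q - 1.
Proof.
  intros Hpq E.
  destruct (classic (tight_end A M p)) as [Tp|Tp]; [left; apply (HL p); left; exact Tp|].
  destruct (classic (tight_end A M (q - 1))) as [Tq|Tq]; [right; apply (HL q); left; exact Tq|].
  left. apply (HL p). right. exists q. auto.
Qed.

(** Stated for the preimages [p], [q] of two positions [L p < L q] ([L] is an involution). *)
Lemma swap_layer_pair_bound p q :
  L p < L q -> 2 * (A p - A q) + (L q - L p) <= M - 2.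
Proof.
  intros Hlt. destruct (Z.lt_trichotomy p q) as [Hpq|[<-|Hqp]]; [|lia|].
  - pose proof (tight_pair_swapped p q Hpq) as Htight.
    pose proof (near_tight_pair_swapped p q Hpq) as Hnear.
    weight_at p q. weight_at (p - 1) q. weight_at p (q + 1). weight_at (p - 1) (q + 1).
    unfold descent_weight in Htight, Hnear.
    destruct (swap_layer_cases p) as [[Ep Dp]|[[Ep Dp]|Ep]];
    destruct (swap_layer_cases q) as [[Eq Dq]|[[Eq Dq]|Eq]];
    (destruct (Z.eq_dec (2 * (A p - A q) + (q - p)) M) as [E|E];
      [destruct (Htight E); lia|]);
    (destruct (Z.eq_dec (2 * (A p - A q) + (q - p)) (M - 1)) as [E'|E'];
      [destruct (Hnear E'); lia|]);
    lia.
  - destruct (swap_layer_cases p) as [[Ep _]|[[Ep _]|Ep]];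
    destruct (swap_layer_cases q) as [[Eq Dq]|[[Eq _]|Eq]]; try lia.
    assert (p = q + 1) by lia. subst p. lia.
Qed.

Lemma swap_layer_weight_bounded : weight_bounded (fun x => A (L x)) (M - 2).
Proof.
  intros p q Hpq. unfold descent_weight.
  pose proof (swap_layer_pair_bound (L p) (L q)) as B.
  rewrite !(swaps_at_involutive _ _ HL) in B. specialize (B Hpq). lia.
Qed.

Lemma swap_layer_bandwidth w : bandwidth_le w A -> bandwidth_le w (fun x => A (L x)).
Proof.
  intros Hband x. cbv beta. pose proof (Hband x).
  destruct (swap_layer_cases x) as [[E D]|[[E D]|E]]; rewrite E.
  - pose proof (Hband (x + 1)). lia.
  - pose proof (Hband (x - 1)). lia.
  - lia.
Qed.

End Layer.

End SwapSites.

(** * Sorting by layers *)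

Definition cyclic_layer (n : Z) (rs : list Z) : Prop :=
  nonadj_family n rs /\ periodic_bij n (prod_transp n rs) /\
  bandwidth_le 1 (prod_transp n rs).

Record sorting_state (n w M : Z) (A : Z -> Z) : Prop := {
  state_bij : periodic_bij n A;
  state_band : bandwidth_le w A;
  state_weight : weight_bounded A M
}.

Lemma periodic_bij_comp (n : Z) (f g : Z -> Z) :
  periodic_bij n f -> periodic_bij n g -> periodic_bij n (fun x => f (g x)).
Proof.
  intros [Finj [Fsurj Fper]] [Ginj [Gsurj Gper]]. split; [|split].
  - intros x y E. apply Ginj, Finj, E.
  - intro z. destruct (Fsurj z) as [y <-]. destruct (Gsurj y) as [x <-]. exists x. reflexivity.
  - intro i. rewrite Gper, Fper. reflexivity.
Qed.

Lemma sorting_step (n w m : Z) (A : Z -> Z) :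
  2 <= n -> 1 <= m -> sorting_state n w (2 * m + 1) A ->
  exists rs, cyclic_layer n rs /\
             sorting_state n w (2 * m - 1) (fun x => A (prod_transp n rs x)).
Proof.
  intros Hn Hm [[Hinj [Hsurj Hper]] Hband Hbound].
  pose proof (swap_site_periodic A (2 * m + 1) n Hper) as Hsites.
  destruct (residue_layer n _ Hn Hsites (swap_site_succ A m Hm Hinj Hbound))
    as [rs [Hfam Hres]].
  assert (HL : swaps_at (swap_site A (2 * m + 1)) (prod_transp n rs)).
  { apply swaps_at_iff with (in_residues n rs); [intro a; symmetry; apply Hres|].
    apply prod_transp_swaps_at; assumption. }
  pose proof (swaps_at_periodic_bij _ _ HL n Hsites) as Hbij.
  exists rs. split; [split; [exact Hfam|split; [exact Hbij|exact (swaps_at_bandwidth _ _ HL)]]|].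
  split.
  - apply periodic_bij_comp; [split; [|split]|]; assumption.
  - apply (swap_layer_bandwidth A m Hm Hinj Hbound); assumption.
  - replace (2 * m - 1) with (2 * m + 1 - 2) by lia.
    apply (swap_layer_weight_bounded A m Hm Hinj Hbound). exact HL.
Qed.

Lemma sorting_layers (n w : Z) (k : nat) (A : Z -> Z) :
  2 <= n -> sorting_state n w (2 * Z.of_nat k + 1) A ->
  exists rss, length rss = k /\ Forall (cyclic_layer n) rss /\
    sorting_state n w 1 (fun x => A (compose_list (map (prod_transp n) rss) x)).
Proof.
  intros Hn. revert A. induction k as [|k IH]; intros A HA.
  - exists []. split; [reflexivity|split; [constructor|exact HA]].
  - destruct (sorting_step n w (Z.of_nat (S k)) A Hn ltac:(lia) HA) as [rs [Hrs HB]].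
    replace (2 * Z.of_nat (S k) - 1) with (2 * Z.of_nat k + 1) in HB by lia.
    destruct (IH _ HB) as [rss [Hlen [Hall Hsorted]]].
    exists (rs :: rss). split; [simpl; lia|split; [constructor; assumption|exact Hsorted]].
Qed.

Lemma sorted_state_translation (n w : Z) (A : Z -> Z) :
  sorting_state n w 1 A -> forall p, A p = A 0 + p.
Proof.
  intros [[Hinj [Hsurj _]] _ Hbound].
  assert (Hincr : forall p q, p < q -> A p < A q).
  { intros p q Hpq. pose proof (Hbound p q Hpq) as B. unfold descent_weight in B.
    assert (A p <> A q) by (intro E; apply Hinj in E; lia). lia. }
  assert (Hsucc : forall p, A (p + 1) = A p + 1).
  { intro p. destruct (Hsurj (A p + 1)) as [z Hz].
    destruct (Z.lt_trichotomy z (p + 1)) as [Hlt|[<-|Hgt]]; [|exact Hz|].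
    - destruct (Z.eq_dec z p) as [->|]; [lia|]. pose proof (Hincr z p ltac:(lia)). lia.
    - pose proof (Hincr _ _ Hgt). pose proof (Hincr p (p + 1) ltac:(lia)). lia. }
  intro p. induction p as [|p IH|p IH] using Z.peano_ind.
  - lia.
  - replace (Z.succ p) with (p + 1) by lia. rewrite Hsucc. lia.
  - pose proof (Hsucc (Z.pred p)) as H. replace (Z.pred p + 1) with p in H by lia. lia.
Qed.

(** * The inverse of a banded permutation *)

Lemma periodic_bij_inverse (n : Z) (f : Z -> Z) :
  periodic_bij n f ->
  exists g, periodic_bij n g /\ (forall y, f (g y) = y) /\ (forall x, g (f x) = x).
Proof.
  intros [Hinj [Hsurj Hper]].
  pose (g := fun y => proj1_sig (constructive_indefinite_description _ (Hsurj y))).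
  assert (Hfg : forall y, f (g y) = y).
  { intro y. exact (proj2_sig (constructive_indefinite_description _ (Hsurj y))). }
  assert (Hgf : forall x, g (f x) = x) by (intro x; apply Hinj; rewrite Hfg; reflexivity).
  exists g. split; [split; [|split]|split; assumption].
  - intros x y E. rewrite <- (Hfg x), <- (Hfg y), E. reflexivity.
  - intro y. exists (f y). apply Hgf.
  - intro p. apply Hinj. rewrite Hper, !Hfg. reflexivity.
Qed.

Lemma bandwidth_le_inverse (w : Z) (f g : Z -> Z) :
  bandwidth_le w f -> (forall y, f (g y) = y) -> bandwidth_le w g.
Proof. intros Hband Hfg p. pose proof (Hband (g p)) as H. rewrite Hfg in H. lia. Qed.

Lemma bandwidth_weight_bounded (w : Z) (A : Z -> Z) :
  bandwidth_le w A -> weight_bounded A (4 * w - 1).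
Proof.
  intros Hband p q Hpq. unfold descent_weight.
  pose proof (Hband p). pose proof (Hband q). lia.
Qed.

Theorem theorem3p1 (n w : Z) (pi : Z -> Z)
  (Hn : 2 <= n) (Hw : 1 <= w) (Hwn : 2 * w <= n)
  (Hpi : periodic_bij n pi) (Hband : bandwidth_le w pi) :
  exists (rss : list (list Z)) (k : Z),
    length rss = Z.to_nat (2 * w - 1) /\
    Forall (fun rs =>
              nonadj_family n rs /\
              periodic_bij n (prod_transp n rs) /\
              bandwidth_le 1 (prod_transp n rs)) rss /\
    Z.abs k <= w /\
    (forall i, pi i = compose_list (map (prod_transp n) rss) (shift_pow k i)).
Proof.
  destruct (periodic_bij_inverse n pi Hpi) as [g [Hg [Hpig _]]].
  pose proof (bandwidth_le_inverse w pi g Hband Hpig) as Hgband.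
  assert (Hstate : sorting_state n w (2 * Z.of_nat (Z.to_nat (2 * w - 1)) + 1) g).
  { rewrite Z2Nat.id by lia. replace (2 * (2 * w - 1) + 1) with (4 * w - 1) by lia.
    split; [exact Hg|exact Hgband|exact (bandwidth_weight_bounded w g Hgband)]. }
  destruct (sorting_layers n w _ g Hn Hstate) as [rss [Hlen [Hall Hsorted]]].
  set (C := compose_list (map (prod_transp n) rss)) in *.
  exists rss, (- g (C 0)). split; [exact Hlen|split; [exact Hall|split]].
  - pose proof (state_band _ _ _ _ Hsorted 0) as H. cbv beta in H. lia.
  - intro i. unfold shift_pow. fold C. rewrite <- (Hpig (C (i + - g (C 0)))). f_equal.
    pose proof (sorted_state_translation _ _ _ Hsorted (i + - g (C 0))) as Ht.
    cbv beta in Ht. lia.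
Qed.
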